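(* Let $k$ be a positive integer and let $G$ be a $2k$-connected $(P_2\cup kP_1)$-free graph. Let $u,v$ be distinct vertices of $G$ and let $P$ be a longest $(u,v)$-path in $G$. Then every component of $G-V(P)$ consists of a single vertex; equivalently, $V(G)\setminus V(P)$ is an independent set.
   Context: All graphs are finite and simple. For a graph $H$, a graph $G$ is $H$-free if $G$ contains no induced subgraph isomorphic to $H$; $P_2\cup kP_1$ is the disjoint union of an edge and $k$ isolated vertices. A $(u,v)$-path is a path with endpoints $u$ and $v$. *)

From mathcomp Require Import all_boot.
Set Implicit Arguments. Unset Strict Implicit. Unset Printing Implicit Defensive.

Definition simple_graph (T : finType) (e : rel T) : Prop :=
  symmetric e /\ irreflexive e.

Definition is_path (T : finType) (e : rel T) (x y : T) (p : seq T) : bool :=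
  [&& path e x p, last x p == y & uniq (x :: p)].

Definition path_vertices (T : finType) (x : T) (p : seq T) : {set T} :=
  [set z | z \in x :: p].

Definition longest_path (T : finType) (e : rel T) (x y : T) (p : seq T) : Prop :=
  is_path e x y p /\ forall q : seq T, is_path e x y q -> size q <= size p.

Definition connected_avoiding (T : finType) (e : rel T) (S : {set T}) : Prop :=
  forall x y : T, x \notin S -> y \notin S ->
    exists p : seq T, is_path e x y p && all (fun z => z \notin S) (x :: p).

Definition k_connected (T : finType) (e : rel T) (k : nat) : Prop :=
  k < #|T| /\ forall S : {set T}, #|S| < k -> connected_avoiding e S.

Definition has_induced_P2_kP1 (T : finType) (e : rel T) (k : nat) : Prop :=
  exists (a b : T) (X : {set T}),
    [/\ #|X| = k, a \notin X, b \notin X, a != b & e a b] /\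
    (forall x y, x \in X -> y \in X -> ~~ e x y) /\
    (forall x, x \in X -> ~~ e a x && ~~ e b x).

Definition P2_kP1_free (T : finType) (e : rel T) (k : nat) : Prop :=
  ~ has_induced_P2_kP1 e k.

(* Suppose xy is an edge of G - V(P), let C be the component of G - V(P)
   containing it and A the set of vertices of P with a neighbour in C.  As P is
   longest, no two vertices of A are consecutive on P, and the successors on P of
   two vertices of A are nonadjacent (otherwise P could be rerouted through C and
   the edge between the successors).  Hence some vertex of P lies outside A, so A
   separates it from C and 2k-connectivity gives |A| >= 2k.  The successors of
   the vertices of A other than v are then at least 2k - 1 >= k pairwise
   nonadjacent vertices with no neighbour in C, and with the edge xy they induce
   P_2 + kP_1. *)

From mathcomp Require Import all_boot zify.

Set Implicit Arguments.
Unset Strict Implicit.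
Unset Printing Implicit Defensive.

Lemma exists_subset_card (T : finType) (A : {set T}) (n : nat) :
  n <= #|A| -> exists2 B : {set T}, B \subset A & #|B| = n.
Proof.
elim: n => [|n IHn] leA; first by exists set0; rewrite ?sub0set ?cards0.
have [B BA cardB] := IHn (ltnW leA).
have : 0 < #|A :\: B| by rewrite cardsD (setIidPr BA) cardB subn_gt0.
rewrite card_gt0 => /set0Pn [a]; rewrite inE => /andP [aB aA].
by exists (a |: B); rewrite ?subUset ?sub1set ?aA ?BA // cardsU1 aB cardB.
Qed.

Lemma next_uniq_cat (T : eqType) (s1 s2 : seq T) (z w : T) :
  uniq (s1 ++ z :: w :: s2) -> next (s1 ++ z :: w :: s2) z = w.
Proof.
rewrite next_nth mem_cat mem_head orbT.
case: s1 => [|a s1] /=; first by rewrite eqxx.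
rewrite mem_cat !inE !negb_or => /andP [/and3P [_ az _]].
rewrite cat_uniq => /and3P [_ /hasPn zs1 _].
have {}zs1 : z \notin s1 by apply: zs1; rewrite mem_head.
rewrite (negbTE az) index_cat (negbTE zs1) /= eqxx addn0.
by rewrite nth_cat ltnNge leqnSn subSnn.
Qed.

Lemma split_next (T : eqType) (x0 z : T) (s : seq T) :
  uniq s -> z \in s -> z != last x0 s -> exists s1 s2, s = s1 ++ z :: next s z :: s2.
Proof.
move=> s_uniq zs; case/splitPr: zs s_uniq => s1 [|w s2] s_uniq.
  by rewrite last_cat /= eqxx.
by exists s1, s2; rewrite next_uniq_cat.
Qed.

Lemma split_mem2 (T : eqType) (z1 z2 : T) (s : seq T) :
  z1 \in s -> z2 \in s -> z1 != z2 ->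
  exists s1 s2 s3, s = s1 ++ z1 :: s2 ++ z2 :: s3 \/ s = s1 ++ z2 :: s2 ++ z1 :: s3.
Proof.
move=> z1s z2s z12; case/splitPr: z2s z1s => t1 t2.
rewrite mem_cat inE (negbTE z12) /=.
case/orP => /splitPr [r1 r2]; last by exists t1, r1, r2; right.
by exists r1, r2, t2; left; rewrite -catA.
Qed.

Lemma last_path_closed (T : finType) (e : rel T) (C : pred T) (A : {set T}) x r :
  (forall h w, C h -> e h w -> w \notin A -> C w) ->
  C x -> path e x r -> all (fun z => z \notin A) r -> C (last x r).
Proof.
move=> C_closed; elim: r x => [|w r IHr] x //= Cx /andP [xw rP] /andP [wA rA].
exact: IHr (C_closed x w Cx xw wA) rP rA.
Qed.

Lemma longest_path_maximal (T : finType) (e : rel T) (u v : T) (p : seq T) :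
  longest_path e u v p -> forall l, sorted e l -> uniq l -> head u l = u ->
  last u l = v -> size l <= size (u :: p).
Proof.
move=> [_ longest] [|a l] //= lP lU au; subst a => lv; rewrite ltnS.
by apply: longest; apply/and3P; split=> //; apply/eqP.
Qed.

Section LongestPath.

Variables (T : finType) (e : rel T).
Hypotheses (e_sym : symmetric e) (e_irr : irreflexive e).
Variables (u v : T) (s : seq T).
Hypotheses (s_sorted : sorted e s) (s_uniq : uniq s).
Hypotheses (s_head : head u s = u) (s_last : last u s = v).
Hypothesis s_longest : forall l, sorted e l -> uniq l -> head u l = u ->
  last u l = v -> size l <= size s.

Lemma no_longer_path (Q l : seq T) :
  perm_eq l (Q ++ s) -> Q != [::] -> uniq Q -> all (fun t => t \notin s) Q ->
  sorted e l -> head u l = u -> last u l = v -> False.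
Proof.
move=> lQs Q0 Q_uniq Q_off l_sorted l_head l_last.
have l_uniq : uniq l.
  rewrite (perm_uniq lQs) cat_uniq Q_uniq s_uniq andbT.
  by apply/hasPn => t ts; apply: contraL ts => /(allP Q_off).
have := s_longest l_sorted l_uniq l_head l_last.
by rewrite (perm_size lQs) size_cat -{2}[size s]add0n leq_add2r leqn0 size_eq0 (negbTE Q0).
Qed.

Lemma longest_path_no_detour s1 z w s2 a b q :
  s = s1 ++ z :: w :: s2 -> is_path e a b q -> all (fun t => t \notin s) (a :: q) ->
  e z a -> e b w -> False.
Proof.
move=> s_def /and3P [qP /eqP qb q_uniq] q_off za bw.
apply: (@no_longer_path _ (s1 ++ z :: (a :: q) ++ w :: s2) _ _ q_uniq q_off) => //.
- by rewrite s_def -cat1s catA perm_catCA -catA.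
- move: s_sorted; rewrite s_def !sorted_cat_cons => /andP [-> /andP [_ wP]].
  by rewrite /= za cat_path qP qb /= bw.
- by move: s_head; rewrite s_def; case: (s1).
- by rewrite -s_last s_def !last_cat /= last_cat.
Qed.

Lemma longest_path_no_crossed_detour s1 z1 w1 mid z2 w2 s3 a b q :
  s = s1 ++ z1 :: w1 :: mid ++ z2 :: w2 :: s3 -> is_path e a b q ->
  all (fun t => t \notin s) (a :: q) -> e z1 a -> e b z2 -> ~~ e w1 w2.
Proof.
move=> s_def /and3P [qP /eqP qb q_uniq] q_off z1a bz2; apply/negP => w12.
(* Go z1 a..b z2, back along mid to w1, across the edge w1w2, and on to v. *)
pose l := s1 ++ z1 :: (a :: q) ++ z2 :: rev (w1 :: mid) ++ w2 :: s3.
apply: (@no_longer_path _ l _ _ q_uniq q_off).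
- rewrite /l s_def -cat1s catA perm_catCA -catA perm_cat2l perm_cat2l /= perm_cons.
  rewrite -cat1s catA -[w1 :: mid ++ _]/((w1 :: mid) ++ [:: z2] ++ _) catA.
  by rewrite perm_cat2r perm_catC perm_cat2r perm_rev.
- by [].
- move: s_sorted; rewrite /l s_def !sorted_cat_cons /= cat_path.
  move=> /andP [-> /and3P [_ midP /andP [mid_z2 /andP [_ w2P]]]].
  have revP : path e z2 (rev (w1 :: mid)).
    have := rev_path e w1 (rcons mid z2).
    rewrite last_rcons belast_rcons => ->.
    by rewrite (@eq_path _ _ e) ?rcons_path ?midP // => ? ?; rewrite e_sym.
  by rewrite /= z1a cat_path qP qb /= bz2 cat_path revP rev_cons last_rcons /= w12.
- by move: s_head; rewrite /l s_def; case: (s1).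
- by rewrite -s_last /l s_def !last_cat /= !last_cat /= last_cat.
Qed.

Variable x : T.
Hypothesis x_off : x \notin s.

Definition avoid_rel := [rel a b | [&& e a b, a \notin s & b \notin s]].

Local Notation in_component := (connect avoid_rel x).

Lemma avoid_rel_sym : symmetric avoid_rel.
Proof. by move=> a b /=; rewrite e_sym [(a \notin s) && _]andbC. Qed.

Lemma avoid_path_off a q : path avoid_rel a q -> all (fun t => t \notin s) q.
Proof. by elim: q a => //= b q IHq a /andP [/and3P [_ _ ->] /IHq]. Qed.

Lemma component_off_path h : in_component h -> h \notin s.
Proof.
move=> /connectP [q /avoid_path_off + ->].
by case/lastP: q => [|q t]; rewrite ?last_rcons ?all_rcons //= => /andP [].
Qed.

Lemma component_detour h1 h2 : in_component h1 -> in_component h2 ->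
  exists q, is_path e h1 h2 q && all (fun t => t \notin s) (h1 :: q).
Proof.
move=> h1C h2C.
have : connect avoid_rel h1 h2.
  by apply: connect_trans h2C; rewrite (sym_connect_sym avoid_rel_sym).
case/connectP => q qP ->; have [q' q'P q'_uniq _] := shortenP qP.
exists q'; rewrite /is_path eqxx q'_uniq /= component_off_path ?(avoid_path_off q'P) //.
by rewrite (sub_path _ q'P) // => ? ? /andP [].
Qed.

Definition attachment z := (z \in s) && [exists h, in_component h && e h z].

Lemma attachment_detour z1 z2 : attachment z1 -> attachment z2 ->
  exists a b q, [/\ is_path e a b q, all (fun t => t \notin s) (a :: q), e z1 a & e b z2].
Proof.
move=> /andP [_ /existsP [a /andP [aC az1]]] /andP [_ /existsP [b /andP [bC bz2]]].
have [q /andP [qP q_off]] := component_detour aC bC.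
by exists a, b, q; rewrite e_sym.
Qed.

Lemma attachments_not_consecutive s1 z w s2 :
  s = s1 ++ z :: w :: s2 -> attachment z -> ~~ attachment w.
Proof.
move=> s_def zA; apply/negP => wA.
have [a [b [q [qP q_off za bw]]]] := attachment_detour zA wA.
exact: longest_path_no_detour s_def qP q_off za bw.
Qed.

Lemma attachments_not_crossed s1 z1 w1 mid z2 w2 s3 :
  s = s1 ++ z1 :: w1 :: mid ++ z2 :: w2 :: s3 ->
  attachment z1 -> attachment z2 -> ~~ e w1 w2.
Proof.
move=> s_def z1A z2A.
have [a [b [q [qP q_off z1a bz2]]]] := attachment_detour z1A z2A.
exact: longest_path_no_crossed_detour s_def qP q_off z1a bz2.
Qed.

Lemma attachment_next z : attachment z -> z != v -> ~~ attachment (next s z).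
Proof.
move=> zA zv; have zs : z \in s by case/andP: zA.
have zv' : z != last u s by rewrite s_last.
have [s1 [s2 s_def]] := split_next s_uniq zs zv'.
exact: attachments_not_consecutive s_def zA.
Qed.

Lemma next_attachments_nonadj z1 z2 :
  attachment z1 -> attachment z2 -> z1 != v -> z2 != v -> z1 != z2 ->
  ~~ e (next s z1) (next s z2).
Proof.
wlog [s1 [s2 [s3 s_def]]] : z1 z2 / exists s1 s2 s3, s = s1 ++ z1 :: s2 ++ z2 :: s3.
  move=> W z1A z2A z1v z2v z12.
  have [z1s z2s] : z1 \in s /\ z2 \in s by case/andP: z1A; case/andP: z2A.
  have [s1 [s2 [s3 [s_def|s_def]]]] := split_mem2 z1s z2s z12.
    by apply: W => //; exists s1, s2, s3.
  rewrite e_sym; apply: (W z2 z1) => //; last by rewrite eq_sym.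
  by exists s1, s2, s3.
move=> z1A z2A _ z2v _.
case: s2 s_def => [|w1 mid] s_def.
  by have := attachments_not_consecutive s_def z1A; rewrite z2A.
case: s3 s_def => [|w2 s3] s_def.
  by move: z2v; rewrite -s_last s_def last_cat /= last_cat /= eqxx.
have -> : next s z1 = w1 by rewrite s_def next_uniq_cat // -s_def.
have -> : next s z2 = w2.
  by rewrite s_def -cat_cons catA next_uniq_cat // -catA -s_def.
exact: attachments_not_crossed s_def z1A z2A.
Qed.

Lemma not_attachment_nonadj h t : t \in s -> ~~ attachment t -> in_component h -> ~~ e h t.
Proof.
move=> ts tA hC; apply: contra tA => ht.
by rewrite /attachment ts; apply/existsP; exists h; rewrite hC.
Qed.

Lemma attachments_card n : 1 < size s ->
  (forall S : {set T}, #|S| < n -> connected_avoiding e S) ->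
  n <= #|[set z | attachment z]|.
Proof.
set A := [set z | attachment z] => s_size conn.
rewrite leqNgt; apply/negP => /conn avoidA.
have [w ws wA] : exists2 w, w \in s & w \notin A.
  case s_def: s s_size => [|a [|b r]] // _.
  case: (boolP (attachment a)) => aA; last by exists a; rewrite ?mem_head ?inE.
  exists b; first by rewrite !inE eqxx orbT.
  by rewrite inE (@attachments_not_consecutive [::] a b r).
have xA : x \notin A by rewrite inE /attachment (negbTE x_off).
have [r /andP [/and3P [rP /eqP rw _] /andP [_ r_off]]] := avoidA x w xA wA.
have A_closed h t : in_component h -> e h t -> t \notin A -> in_component t.
  move=> hC ht tA; have ts : t \notin s.
    apply: contra tA => ts.
    by rewrite inE /attachment ts; apply/existsP; exists h; rewrite hC ht.
  by apply: (connect_trans hC); apply: connect1; rewrite /= ht ts (component_off_path hC).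
have := last_path_closed A_closed (connect0 _ x) rP r_off.
by rewrite rw => /component_off_path; rewrite ws.
Qed.

Lemma attachments_induce_P2_kP1 k y : y \notin s -> e x y ->
  k <= #|[set z | attachment z] :\ v| -> has_induced_P2_kP1 e k.
Proof.
set A' := _ :\ v => y_off xy.
rewrite -(card_imset A' (can_inj (prev_next s_uniq))).
move=> /exists_subset_card [X XA' X_card].
have X_next a : a \in X -> exists z, [/\ attachment z, z != v & a = next s z].
  by case/(subsetP XA')/imsetP => z; rewrite !inE => /andP [zv zA] ->; exists z.
have X_on_s a : a \in X -> a \in s.
  by case/X_next => z [/andP [zs _] _ ->]; rewrite mem_next.
exists x, y, X; split; [split | split] => //.
- by apply: contra x_off; apply: X_on_s.
- by apply: contra y_off; apply: X_on_s.
- by apply: contraTneq xy => ->; rewrite e_irr.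
- move=> a b /X_next [z1 [z1A z1v ->]] /X_next [z2 [z2A z2v ->]].
  have [-> | z12] := eqVneq z1 z2; first by rewrite e_irr.
  exact: next_attachments_nonadj.
- move=> a aX; have [z [zA zv a_def]] := X_next a aX.
  have aA : ~~ attachment a by rewrite a_def attachment_next.
  rewrite !not_attachment_nonadj ?X_on_s ?connect0 //.
  by apply: connect1; rewrite /= xy x_off y_off.
Qed.

End LongestPath.

Theorem mainTheorem4 (T : finType) (e : rel T) (k : nat) :
  simple_graph e -> 0 < k -> k_connected e (2 * k) -> P2_kP1_free e k ->
  forall (u v : T) (p : seq T), u != v -> longest_path e u v p ->
  forall x y : T, x \notin path_vertices u p -> y \notin path_vertices u p ->
    ~~ e x y.
Proof.
move=> [e_sym e_irr] k_gt0 [_ conn] free u v p uv p_longest x y.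
rewrite /path_vertices !inE => x_off y_off; apply/negP => xy; apply: free.
have [/and3P [p_path /eqP p_last s_uniq] _] := p_longest.
have s_sorted : sorted e (u :: p) := p_path.
have s_last : last u (u :: p) = v := p_last.
have s_size : 1 < size (u :: p).
  by case: (p) p_last => //= uv_eq; rewrite uv_eq eqxx in uv.
have s_longest := longest_path_maximal p_longest.
have := attachments_card e_sym s_sorted s_uniq (erefl u) s_last s_longest x_off
  s_size conn.
rewrite (cardsD1 v) => A_card.
apply: (attachments_induce_P2_kP1 e_sym e_irr s_sorted s_uniq (erefl u) s_last
  s_longest x_off y_off xy).
by have := leq_b1 (v \in [set z | attachment e (u :: p) x z]); lia.
Qed.
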